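(* For every language L_1 ∈ GRLOWJ there exists a language L_2 ∈ GLLOWJ such that L_1^R = L_2, and vice versa (for every L_2 ∈ GLLOWJ there exists L_1 ∈ GRLOWJ with L_2^R = L_1).
   Context: For a word w = a_1⋯a_n, w^R = a_n⋯a_1, and L^R = {w^R : w ∈ L}. A generalized right linear one-way jumping finite automaton (GRLOWJFA) is a tuple A = (Σ, Q, q_0, F, R) with alphabet Σ, finite state set Q, start state q_0, final states F ⊆ Q, and a finite set of rules R ⊂ Q × Σ^+ × Q such that for each p ∈ Q and w ∈ Σ^+ there is at most one q with (p,w,q) ∈ R (rule (p,w,q): from p, delete w, go to q). For p ∈ Q let Σ_p = {w ∈ Σ^+ : (p,w,q) ∈ R for some q}. Configurations are strings in Σ^* Q Σ^*, with moves: (1) for t,u,v ∈ Σ^* and (p,x,q) ∈ R, tpuxv ⇒ tuqv, provided u contains no word of Σ_p as a subword and there is no nonempty suffix u_2 of u and nonempty prefix x_1 of x with u_2x_1 = x; (2) for x ∈ Σ^+ and y ∈ Σ^* such that y contains no word of Σ_p as a subword, xpy ⇒ pxy. Accepted language: {w ∈ Σ^* : q_0 w ⇒^* q_f for some q_f ∈ F}. A generalized left linear one-way jumping finite automaton (GLLOWJFA) is a tuple A = (Σ, Q, q_0, F, R) with R ⊂ Q × Σ^+ × Q finite; a rule (q,w,p) means from p, delete w, go to q, and for each p and w there is at most one such q. For p ∈ Q let Σ_p = {w ∈ Σ^+ : (q,w,p) ∈ R for some q}. Configurations are strings in Σ^* Q Σ^*, with moves: (1) for t,u,v ∈ Σ^*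 and (q,x,p) ∈ R, vxupt moves to vqut, provided u contains no word of Σ_p as a subword and there is no nonempty prefix u_1 of u and nonempty suffix x_2 of x with x_2u_1 = x; (2) for x ∈ Σ^+ and y ∈ Σ^* such that y contains no word of Σ_p as a subword, ypx moves to yxp. Accepted language: {w ∈ Σ^* : w q_0 leads in zero or more moves to q_f for some q_f ∈ F}. GRLOWJ and GLLOWJ denote the classes of languages accepted by GRLOWJFA and GLLOWJFA respectively. *)

From mathcomp Require Import all_boot.
Set Implicit Arguments. Unset Strict Implicit. Unset Printing Implicit Defensive.

(* Words over a finite alphabet Sigma are [seq Sigma]; a language is a
   predicate on words.  "Subword" means factor (contiguous), i.e. [infix]. *)

Definition language (Sigma : finType) := seq Sigma -> Prop.

Definition lang_rev (Sigma : finType) (L : language Sigma) : language Sigma :=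
  fun w => L (rev w).

Inductive star (C : Type) (step : C -> C -> Prop) : C -> C -> Prop :=
| star_refl c : star step c c
| star_step c1 c2 c3 : step c1 c2 -> star step c2 c3 -> star step c1 c3.

Record gowjfa (Sigma : finType) := GOWJFA {
  state : finType;
  start : state;
  final : pred state;
  rules : seq (state * seq Sigma * state);
  rules_nonempty : forall p w q, (p, w, q) \in rules -> w != [::];
}.

Definition config (Sigma : finType) (A : gowjfa Sigma) :=
  (seq Sigma * state A * seq Sigma)%type.

(* rule (p,w,q): from p, delete w, go to q; deterministic in (p,w) *)
Definition R_deterministic (Sigma : finType) (A : gowjfa Sigma) : Prop :=
  forall p w q1 q2, (p, w, q1) \in rules A -> (p, w, q2) \in rules A -> q1 = q2.

Definition R_Sigma_p (Sigma : finType) (A : gowjfa Sigma) (p : state A)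
  (w : seq Sigma) : Prop := exists q, (p, w, q) \in rules A.

Inductive R_step (Sigma : finType) (A : gowjfa Sigma) : config A -> config A -> Prop :=
| R_step_rule (t u x v : seq Sigma) (p q : state A) :
    (p, x, q) \in rules A ->
    (forall w, R_Sigma_p p w -> ~~ infix w u) ->
    ~ (exists u2 x1, u2 != [::] /\ x1 != [::] /\ suffix u2 u /\ prefix x1 x
                     /\ u2 ++ x1 = x) ->
    R_step (t, p, u ++ x ++ v) (t ++ u, q, v)
| R_step_jump (x y : seq Sigma) (p : state A) :
    x != [::] ->
    (forall w, R_Sigma_p p w -> ~~ infix w y) ->
    R_step (x, p, y) ([::], p, x ++ y).

Definition R_accepts (Sigma : finType) (A : gowjfa Sigma) (w : seq Sigma) : Prop :=
  exists qf : state A, @final Sigma A qf /\ star (@R_step Sigma A) ([::], @start Sigma A, w) ([::], qf, [::]).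

Definition GRLOWJ (Sigma : finType) (L : language Sigma) : Prop :=
  exists A : gowjfa Sigma, R_deterministic A /\
    forall w, L w <-> R_accepts A w.

(* rule (q,w,p): from p, delete w, go to q; deterministic in (p,w) *)
Definition L_deterministic (Sigma : finType) (A : gowjfa Sigma) : Prop :=
  forall p w q1 q2, (q1, w, p) \in rules A -> (q2, w, p) \in rules A -> q1 = q2.

Definition L_Sigma_p (Sigma : finType) (A : gowjfa Sigma) (p : state A)
  (w : seq Sigma) : Prop := exists q, (q, w, p) \in rules A.

Inductive L_step (Sigma : finType) (A : gowjfa Sigma) : config A -> config A -> Prop :=
| L_step_rule (t u x v : seq Sigma) (p q : state A) :
    (q, x, p) \in rules A ->
    (forall w, L_Sigma_p p w -> ~~ infix w u) ->
    ~ (exists u1 x2, u1 != [::] /\ x2 != [::] /\ prefix u1 u /\ suffix x2 x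
                     /\ x2 ++ u1 = x) ->
    L_step (v ++ x ++ u, p, t) (v, q, u ++ t)
| L_step_jump (x y : seq Sigma) (p : state A) :
    x != [::] ->
    (forall w, L_Sigma_p p w -> ~~ infix w y) ->
    L_step (y, p, x) (y ++ x, p, [::]).

Definition L_accepts (Sigma : finType) (A : gowjfa Sigma) (w : seq Sigma) : Prop :=
  exists qf : state A, @final Sigma A qf /\ star (@L_step Sigma A) (w, @start Sigma A, [::]) ([::], qf, [::]).

Definition GLLOWJ (Sigma : finType) (L : language Sigma) : Prop :=
  exists A : gowjfa Sigma, L_deterministic A /\
    forall w, L w <-> L_accepts A w.

From mathcomp Require Import all_boot.
Set Implicit Arguments. Unset Strict Implicit. Unset Printing Implicit Defensive.

(* Reversing the tape mirrors the machine: the configuration t p s of a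
   right-linear automaton becomes s^R p t^R, a rule (p, x, q) becomes the
   left-linear rule (q, x^R, p), and under reversal the factor, prefix and
   suffix conditions guarding a move of one kind turn into exactly those
   guarding the corresponding move of the other kind. So every computation
   q0 w =>* qf of one automaton is, read backwards on the tape, a computation
   w^R q0 =>* qf of its mirror, and conversely. *)

Lemma star_map (C D : Type) (r : C -> C -> Prop) (r' : D -> D -> Prop) (f : C -> D) :
  (forall c c', r c c' -> r' (f c) (f c')) ->
  forall c c', star r c c' -> star r' (f c) (f c').
Proof.
move=> f_step c c'; elim=> [d | c1 c2 c3 /f_step step12 _ star23].
  exact: star_refl.
exact: star_step step12 star23.
Qed.

Lemma rev_eq_nil (T : eqType) (s : seq T) : (rev s == [::]) = (s == [::]).
Proof. by rewrite -!size_eq0 size_rev. Qed.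

Section Mirror.

Variable Sigma : finType.

Definition rule_rev (S : Type) (r : S * seq Sigma * S) : S * seq Sigma * S :=
  (r.2, rev r.1.2, r.1.1).

Lemma rule_revK (S : Type) : involutive (@rule_rev S).
Proof. by case=> [[p w] q]; rewrite /rule_rev /= revK. Qed.

Lemma mem_map_rule_rev (S : eqType) (s : seq (S * seq Sigma * S)) p w q :
  ((p, w, q) \in map (@rule_rev S) s) = ((q, rev w, p) \in s).
Proof.
have -> : (p, w, q) = rule_rev (q, rev w, p) by rewrite /rule_rev /= revK.
by rewrite mem_map //; exact: inv_inj (@rule_revK S).
Qed.

Lemma map_rule_rev_nonempty (A : gowjfa Sigma) p w q :
  (p, w, q) \in map (@rule_rev _) (rules A) -> w != [::].
Proof.
by rewrite mem_map_rule_rev => /rules_nonempty; rewrite rev_eq_nil.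
Qed.

Definition mirror (A : gowjfa Sigma) : gowjfa Sigma :=
  @GOWJFA Sigma (state A) (start A) (@final _ A) _ (@map_rule_rev_nonempty A).

Lemma mem_mirror_rules (A : gowjfa Sigma) p w q :
  ((p, w, q) \in rules (mirror A)) = ((q, rev w, p) \in rules A).
Proof. exact: mem_map_rule_rev. Qed.

Lemma L_Sigma_p_mirror (A : gowjfa Sigma) p w :
  @L_Sigma_p _ (mirror A) p w <-> @R_Sigma_p _ A p (rev w).
Proof. by split=> -[q hq]; exists q; rewrite mem_mirror_rules in hq *. Qed.

Lemma R_Sigma_p_mirror (A : gowjfa Sigma) p w :
  @R_Sigma_p _ (mirror A) p w <-> @L_Sigma_p _ A p (rev w).
Proof. by split=> -[q hq]; exists q; rewrite mem_mirror_rules in hq *. Qed.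

Lemma mirror_L_deterministic (A : gowjfa Sigma) :
  R_deterministic A -> L_deterministic (mirror A).
Proof. by move=> detA p w q1 q2; rewrite !mem_mirror_rules; exact: detA. Qed.

Lemma mirror_R_deterministic (A : gowjfa Sigma) :
  L_deterministic A -> R_deterministic (mirror A).
Proof. by move=> detA p w q1 q2; rewrite !mem_mirror_rules; exact: detA. Qed.

Definition R_overlap (u x : seq Sigma) : Prop :=
  exists u2 x1, u2 != [::] /\ x1 != [::] /\ suffix u2 u /\ prefix x1 x /\ u2 ++ x1 = x.

Definition L_overlap (u x : seq Sigma) : Prop :=
  exists u1 x2, u1 != [::] /\ x2 != [::] /\ prefix u1 u /\ suffix x2 x /\ x2 ++ u1 = x.

Lemma L_overlap_rev u x : L_overlap (rev u) (rev x) -> R_overlap u x.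
Proof.
case=> u1 [x2 [nz_u1 [nz_x2 [pre_u1 [suf_x2 def_x]]]]]; exists (rev u1), (rev x2).
by do !split; rewrite ?rev_eq_nil ?suffix_revLR ?prefix_revLR
  -?rev_cat ?def_x ?revK.
Qed.

Lemma R_overlap_rev u x : R_overlap (rev u) (rev x) -> L_overlap u x.
Proof.
case=> u2 [x1 [nz_u2 [nz_x1 [suf_u2 [pre_x1 def_x]]]]]; exists (rev u2), (rev x1).
by do !split; rewrite ?rev_eq_nil ?suffix_revLR ?prefix_revLR
  -?rev_cat ?def_x ?revK.
Qed.

Lemma factor_free_rev (P Q : seq Sigma -> Prop) u :
  (forall w, Q w -> P (rev w)) ->
  (forall w, P w -> ~~ infix w u) -> forall w, Q w -> ~~ infix w (rev u).
Proof. by move=> QP Pu w /QP /Pu; rewrite -infix_rev revK. Qed.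

Definition config_rev (S : Type) (c : seq Sigma * S * seq Sigma) :
  seq Sigma * S * seq Sigma :=
  (rev c.2, c.1.2, rev c.1.1).

Variable A : gowjfa Sigma.

Lemma R_step_mirror (c c' : config A) :
  R_step c c' -> @L_step _ (mirror A) (config_rev c) (config_rev c').
Proof.
case=> [t u x v p q rule_pxq free_u no_overlap | x y p nz_x free_y].
- rewrite /config_rev /= !rev_cat -catA; apply: L_step_rule.
  + rewrite mem_mirror_rules revK; exact: rule_pxq.
  + by apply: factor_free_rev free_u => w /L_Sigma_p_mirror.
  + by move/L_overlap_rev/no_overlap.
- rewrite /config_rev /= rev_cat; apply: L_step_jump.
  + rewrite rev_eq_nil; exact: nz_x.
  + by apply: factor_free_rev free_y => w /L_Sigma_p_mirror.
Qed.

Lemma L_step_mirror (c c' : config A) :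
  L_step c c' -> @R_step _ (mirror A) (config_rev c) (config_rev c').
Proof.
case=> [t u x v p q rule_qxp free_u no_overlap | x y p nz_x free_y].
- rewrite /config_rev /= !rev_cat -catA; apply: R_step_rule.
  + rewrite mem_mirror_rules revK; exact: rule_qxp.
  + by apply: factor_free_rev free_u => w /R_Sigma_p_mirror.
  + by move/R_overlap_rev/no_overlap.
- rewrite /config_rev /= rev_cat; apply: R_step_jump.
  + rewrite rev_eq_nil; exact: nz_x.
  + by apply: factor_free_rev free_y => w /R_Sigma_p_mirror.
Qed.

Lemma mirror_L_step (c c' : config (mirror A)) :
  L_step c c' -> @R_step _ A (config_rev c) (config_rev c').
Proof.
case=> [t u x v p q rule_qxp free_u no_overlap | x y p nz_x free_y].
- rewrite /config_rev /= !rev_cat -catA; apply: R_step_rule.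
  + rewrite -mem_mirror_rules; exact: rule_qxp.
  + by apply: factor_free_rev free_u => w hw; apply/L_Sigma_p_mirror; rewrite revK.
  + by move/R_overlap_rev/no_overlap.
- rewrite /config_rev /= rev_cat; apply: R_step_jump.
  + rewrite rev_eq_nil; exact: nz_x.
  + by apply: factor_free_rev free_y => w hw; apply/L_Sigma_p_mirror; rewrite revK.
Qed.

Lemma mirror_R_step (c c' : config (mirror A)) :
  R_step c c' -> @L_step _ A (config_rev c) (config_rev c').
Proof.
case=> [t u x v p q rule_pxq free_u no_overlap | x y p nz_x free_y].
- rewrite /config_rev /= !rev_cat -catA; apply: L_step_rule.
  + rewrite -mem_mirror_rules; exact: rule_pxq.
  + by apply: factor_free_rev free_u => w hw; apply/R_Sigma_p_mirror; rewrite revK.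
  + by move/L_overlap_rev/no_overlap.
- rewrite /config_rev /= rev_cat; apply: L_step_jump.
  + rewrite rev_eq_nil; exact: nz_x.
  + by apply: factor_free_rev free_y => w hw; apply/R_Sigma_p_mirror; rewrite revK.
Qed.

Lemma L_accepts_mirror w : L_accepts (mirror A) w <-> R_accepts A (rev w).
Proof.
split=> -[qf [final_qf run]]; exists qf; split=> //.
  by move: (star_map mirror_L_step run); rewrite /config_rev.
by move: (star_map R_step_mirror run); rewrite /config_rev /= revK.
Qed.

Lemma R_accepts_mirror w : R_accepts (mirror A) w <-> L_accepts A (rev w).
Proof.
split=> -[qf [final_qf run]]; exists qf; split=> //.
  by move: (star_map mirror_R_step run); rewrite /config_rev.
by move: (star_map L_step_mirror run); rewrite /config_rev /= revK.
Qed.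

End Mirror.

Lemma GRLOWJ_rev (Sigma : finType) (L : language Sigma) :
  GRLOWJ L -> GLLOWJ (lang_rev L).
Proof.
case=> A [detA accA]; exists (mirror A); split; first exact: mirror_L_deterministic.
by move=> w; apply: iff_trans (accA (rev w)) (iff_sym (L_accepts_mirror A w)).
Qed.

Lemma GLLOWJ_rev (Sigma : finType) (L : language Sigma) :
  GLLOWJ L -> GRLOWJ (lang_rev L).
Proof.
case=> A [detA accA]; exists (mirror A); split; first exact: mirror_R_deterministic.
by move=> w; apply: iff_trans (accA (rev w)) (iff_sym (R_accepts_mirror A w)).
Qed.

Theorem proposition1 (Sigma : finType) :
  (forall L1 : language Sigma, GRLOWJ L1 ->
     exists L2 : language Sigma, GLLOWJ L2 /\ forall w, lang_rev L1 w <-> L2 w) /\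
  (forall L2 : language Sigma, GLLOWJ L2 ->
     exists L1 : language Sigma, GRLOWJ L1 /\ forall w, lang_rev L2 w <-> L1 w).
Proof.
split=> L hL; exists (lang_rev L); split=> [|w //].
  exact: GRLOWJ_rev hL.
exact: GLLOWJ_rev hL.
Qed.
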